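(* Let $f\in\mathrm{Conv}_0^+(\mathbb{R}^n,\mathbb{R})$ be a smooth ($C^\infty$) function. If $0\ne y=df(x_0)$ for some $x_0\in\mathbb{R}^n$, then (1) $|f^*(y)|\le(1+2|x_0|)\sup_{|x|\le|x_0|+1}|f(x)|$, and (2) $|y|\le 2\sup_{|x|\le|x_0|+1}|f(x)|$. Moreover, for $R\ge0$ and $y\in\mathbb{R}^n$, $f^*(y)\le(1+2R)\sup_{|x|\le R+1}|f(x)|$ implies $|y|\le 2\sup_{|x|\le R+1}|f(x)|$.
   Context: $\mathrm{Conv}(\mathbb{R}^n,\mathbb{R})$ denotes finite-valued convex functions on $\mathbb{R}^n$. $\mathrm{Conv}_0^+(\mathbb{R}^n,\mathbb{R})$ is the set of $f\in\mathrm{Conv}(\mathbb{R}^n,\mathbb{R})$ with $f(0)=0<f(x)$ for all $x\ne0$ such that $f-\lambda\frac{|\cdot|^2}{2}$ is convex for some $\lambda>0$. $f^*(y)=\sup_{x\in\mathbb{R}^n}(\langle y,x\rangle-f(x))$ is the Legendre transform, and $df(x_0)$ is the gradient of $f$ at $x_0$. *)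

From HB Require Import structures.
From mathcomp Require Import all_boot all_order all_algebra.
From mathcomp Require Import all_classical all_reals all_analysis.
Set Implicit Arguments. Unset Strict Implicit. Unset Printing Implicit Defensive.
Import Order.TTheory GRing.Theory Num.Theory.
Import numFieldNormedType.Exports.
Local Open Scope ring_scope.
Local Open Scope classical_set_scope.

Section Defs.
Variables (R : realType) (n : nat).
Local Notation V := 'rV[R]_n.

Definition dotv (u v : V) : R := \sum_(i < n) u 0 i * v 0 i.
Definition enorm (v : V) : R := Num.sqrt (dotv v v).

Definition convex_fun (f : V -> R) : Prop :=
  forall (x y : V) (t : R), 0 <= t <= 1 ->
    f (t *: x + (1 - t) *: y) <= t * f x + (1 - t) * f y.

Definition Conv0p (f : V -> R) : Prop :=
  convex_fun f /\ f 0 = 0 /\ (forall x, x != 0 -> 0 < f x) /\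
  exists lam : R, 0 < lam /\ convex_fun (fun x => f x - lam * (enorm x ^+ 2) / 2).

Fixpoint iterD (vs : seq V) (f : V -> R) : V -> R :=
  match vs with
  | [::] => f
  | v :: vs' => fun x => 'D_v (iterD vs' f) x
  end.

Definition smooth (f : V -> R) : Prop :=
  forall vs : seq V, continuous (iterD vs f) /\
    (forall (v x : V), derivable (iterD vs f) x v).

Definition is_gradient (f : V -> R) (x0 y : V) : Prop :=
  differentiable f x0 /\ forall v : V, 'd f x0 v = dotv y v.

Definition legendre (f : V -> R) (y : V) : \bar R :=
  ereal_sup [set ((dotv y x - f x)%:E) | x in [set: V]].

Definition supball (f : V -> R) (r : R) : \bar R :=
  ereal_sup [set (`|f x|%:E) | x in [set x : V | enorm x <= r]].
End Defs.

From HB Require Import structures.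
From mathcomp Require Import all_boot all_order all_algebra.
From mathcomp Require Import all_classical all_reals all_analysis.
From mathcomp Require Import lra.
Import Order.TTheory GRing.Theory Num.Theory.
Import numFieldNormedType.Exports.
Local Open Scope ring_scope.

(* Let M be the supremum of |f| on the ball of radius r + 1.  Testing the
   Legendre transform at x = (r + 1) y / |y| gives f*(y) >= (r + 1)|y| - M, so
   an upper bound f*(y) <= (1 + 2r) M forces |y| <= 2M.  If y = df(x0), the
   gradient inequality of a convex function shows that the supremum defining
   f*(y) is attained at x0, so 0 = -f(0) <= f*(y) = <y, x0> - f(x0)
   <= |x0||y| + M; with r = |x0| the lower bound again yields |y| <= 2M, whence
   f*(y) <= (1 + 2|x0|) M. *)

Section Legendre.
Set Implicit Arguments.
Unset Strict Implicit.
Variables (R : realType) (n : nat).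
Local Notation V := 'rV[R]_n.

Lemma dotvC (u v : V) : dotv u v = dotv v u.
Proof. by apply: eq_bigr => i _; rewrite mulrC. Qed.

Lemma dotvDl (u w v : V) : dotv (u + w) v = dotv u v + dotv w v.
Proof. by rewrite /dotv -big_split; apply: eq_bigr => i _; rewrite !mxE mulrDl. Qed.

Lemma dotvZl (a : R) (u v : V) : dotv (a *: u) v = a * dotv u v.
Proof. by rewrite /dotv mulr_sumr; apply: eq_bigr => i _; rewrite !mxE mulrA. Qed.

Lemma dotvNl (u v : V) : dotv (- u) v = - dotv u v.
Proof. by rewrite -scaleN1r dotvZl mulN1r. Qed.

Lemma dotv0l (v : V) : dotv 0 v = 0.
Proof. by rewrite -(scale0r (0 : V)) dotvZl mul0r. Qed.

Lemma dotvDr (v u w : V) : dotv v (u + w) = dotv v u + dotv v w.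
Proof. by rewrite dotvC dotvDl !(dotvC v). Qed.

Lemma dotvZr (a : R) (v u : V) : dotv v (a *: u) = a * dotv v u.
Proof. by rewrite dotvC dotvZl dotvC. Qed.

Lemma dotvNr (v u : V) : dotv v (- u) = - dotv v u.
Proof. by rewrite dotvC dotvNl dotvC. Qed.

Lemma dotv0r (v : V) : dotv v 0 = 0.
Proof. by rewrite dotvC dotv0l. Qed.

Lemma dotvv_ge0 (u : V) : 0 <= dotv u u.
Proof. by apply: sumr_ge0 => i _; rewrite -expr2 sqr_ge0. Qed.

Lemma dotvv_eq0 (u : V) : dotv u u = 0 -> u = 0.
Proof.
move=> /eqP; rewrite psumr_eq0 => [/allP uu0|i _]; last by rewrite -expr2 sqr_ge0.
apply/rowP => i; apply/eqP; rewrite mxE -sqrf_eq0 expr2.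
exact: uu0 (mem_index_enum _).
Qed.

Lemma enorm_ge0 (u : V) : 0 <= enorm u.
Proof. exact: sqrtr_ge0. Qed.

Lemma sqr_enorm (u : V) : enorm u ^+ 2 = dotv u u.
Proof. by rewrite sqr_sqrtr // dotvv_ge0. Qed.

Lemma enorm_eq0 (u : V) : enorm u = 0 -> u = 0.
Proof. by move=> u0; apply: dotvv_eq0; rewrite -sqr_enorm u0 expr0n. Qed.

Lemma enorm0 : enorm (0 : V) = 0.
Proof. by rewrite /enorm dotv0l sqrtr0. Qed.

Lemma enormZ (a : R) (u : V) : enorm (a *: u) = `|a| * enorm u.
Proof. by rewrite /enorm dotvZl dotvZr mulrA -expr2 sqrtrM ?sqr_ge0 // sqrtr_sqr. Qed.

Lemma dotv_le_enorm (u v : V) : dotv u v <= enorm u * enorm v.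
Proof.
have [/enorm_eq0 ->|nu] := eqVneq (enorm u) 0; first by rewrite dotv0l enorm0 mul0r.
have [/enorm_eq0 ->|nv] := eqVneq (enorm v) 0; first by rewrite dotv0r enorm0 mulr0.
have a0 : 0 < enorm u by rewrite lt_def nu enorm_ge0.
have b0 : 0 < enorm v by rewrite lt_def nv enorm_ge0.
(* 0 <= | |v| u - |u| v |^2 = 2 |u| |v| (|u| |v| - <u, v>) *)
have := dotvv_ge0 (enorm v *: u - enorm u *: v).
rewrite !(dotvDl, dotvDr, dotvNl, dotvNr, dotvZl, dotvZr) -!sqr_enorm (dotvC v u).
move: (dotv u v) (enorm u) (enorm v) a0 b0 => d a b a0 b0 H.
have ab : 0 < a * b by rewrite mulr_gt0.
by rewrite -subr_ge0 -(pmulr_rge0 _ ab); nra.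
Qed.

Implicit Types (f : V -> R) (x y : V) (r m : R).

Lemma convex_gradient_le f (x0 : V) y : convex_fun f -> is_gradient f x0 y ->
  forall x, dotv y (x - x0) <= f x - f x0.
Proof.
(* By convexity the difference quotient of f at x0 in direction x - x0 is
   bounded by f x - f x0 for steps t in (0, 1]; take the limit t -> 0+. *)
move=> cvx [df dfE] x; set h := x - x0.
have /cvg_dnbhs_at_right dq := @diff_derivable _ _ _ _ _ h df.
rewrite -dfE -deriveE // /derive -(cvg_lim _ dq) //; apply: limr_le; first exact: cvgP dq.
near=> t; have t0 : 0 < t by near: t; exact: nbhs_right_gt.
have t1 : t <= 1 by near: t; exact: nbhs_right_le.
have := cvx x x0 t; rewrite (ltW t0) t1 => /(_ isT).
have -> : t *: x + (1 - t) *: x0 = t *: h + x0.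
  by rewrite /h scalerBr scalerBl scale1r addrCA addrC.
rewrite /= -[t^-1 *: _]/(t^-1 * _) ler_pdivrMl //; lra.
Unshelve. all: by end_near. Qed.

Lemma legendre_ge f y x : ((dotv y x - f x)%:E <= legendre f y)%E.
Proof. by apply: ereal_sup_ubound; exists x. Qed.

Lemma legendre_le f y r : (forall x, dotv y x - f x <= r) -> (legendre f y <= r%:E)%E.
Proof. by move=> fr; apply: ge_ereal_sup => _ [x _ <-]; rewrite lee_fin. Qed.

Lemma legendre_gradient f (x0 : V) y : convex_fun f -> is_gradient f x0 y ->
  legendre f y = (dotv y x0 - f x0)%:E.
Proof.
move=> cvx fy; apply/le_anti; rewrite legendre_ge andbT.
apply: legendre_le => x; have := convex_gradient_le cvx fy x.
rewrite dotvDr dotvNr; lra.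
Qed.

Lemma supball_ge f r x : enorm x <= r -> ((`|f x|)%:E <= supball f r)%E.
Proof. by move=> xr; apply: ereal_sup_ubound; exists x. Qed.

Lemma supball_cases f r : 0 <= r ->
  supball f r = +oo%E \/
  exists2 m, supball f r = m%:E & forall x, enorm x <= r -> `|f x| <= m.
Proof.
move=> r0; have := @supball_ge f r 0; rewrite enorm0 => /(_ r0).
case E: (supball f r) => [m| |] // _; last by left.
by right; exists m => // x /(supball_ge f); rewrite E lee_fin.
Qed.

Lemma legendre_ge_ball f y r m : 0 <= r ->
  (forall x, enorm x <= r -> `|f x| <= m) ->
  ((r * enorm y - m)%:E <= legendre f y)%E.
Proof.
move=> r0 fm; have [/enorm_eq0 y0|ny] := eqVneq (enorm y) 0.
  apply: le_trans (legendre_ge f y 0); rewrite lee_fin y0 enorm0 dotv0r.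
  have /fm/ler_normlP[] : enorm (0 : V) <= r by rewrite enorm0.
  lra.
have ny0 : 0 < enorm y by rewrite lt_def ny enorm_ge0.
pose x := (r / enorm y) *: y.
apply: le_trans (legendre_ge f y x); rewrite lee_fin.
have -> : dotv y x = r * enorm y by rewrite dotvZr -sqr_enorm expr2 mulrA divfK.
have /fm/ler_normlP[] : enorm x <= r.
  by rewrite enormZ ger0_norm ?divfK // divr_ge0 // enorm_ge0.
lra.
Qed.

Lemma enorm_le_supball f y r : 0 <= r ->
  (legendre f y <= (1 + 2 * r)%:E * supball f (r + 1))%E ->
  ((enorm y)%:E <= 2%:E * supball f (r + 1))%E.
Proof.
move=> r0 fy; have r1 : 0 <= r + 1 by lra.
have [->|[m E fm]] := supball_cases f r1; first by rewrite gt0_muley ?leey.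
move: fy; rewrite E -!EFinM !lee_fin => fy.
have := le_trans (legendre_ge_ball y r1 fm) fy; rewrite lee_fin.
have := enorm_ge0 y; nra.
Qed.

Lemma legendre_gradient_le_supball f (x0 : V) y :
  convex_fun f -> f 0 = 0 -> is_gradient f x0 y ->
  (`|legendre f y| <= (1 + 2 * enorm x0)%:E * supball f (enorm x0 + 1))%E /\
  ((enorm y)%:E <= 2%:E * supball f (enorm x0 + 1))%E.
Proof.
move=> cvx f00 fy; have x0_ge0 := enorm_ge0 x0.
have fyE := legendre_gradient cvx fy.
have fy_ge0 : (0 <= legendre f y)%E.
  by have := legendre_ge f y 0; rewrite dotv0r f00 subrr.
rewrite gee0_abs //; have r1 : 0 <= enorm x0 + 1 by lra.
have [->|[m -> fm]] := supball_cases f r1; first by rewrite !gt0_muley ?lte_fin ?leey //; lra.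
have /ler_normlP[fx0_lb fx0_ub] : `|f x0| <= m by apply: fm; lra.
have fy_lb := legendre_ge_ball y r1 fm; rewrite fyE lee_fin in fy_lb.
have cs := dotv_le_enorm y x0; have y_ge0 := enorm_ge0 y.
rewrite fyE -!EFinM !lee_fin; split; nra.
Qed.

End Legendre.

Theorem lemma2p5 (R : realType) (n : nat) (f : 'rV[R]_n -> R) :
  Conv0p f -> smooth f ->
  (forall x0 y : 'rV[R]_n, y != 0 -> is_gradient f x0 y ->
     (`| legendre f y | <= (1 + 2 * enorm x0)%:E * supball f (enorm x0 + 1))%E /\
     ((enorm y)%:E <= 2%:E * supball f (enorm x0 + 1))%E) /\
  (forall (r : R) (y : 'rV[R]_n), 0 <= r ->
     (legendre f y <= (1 + 2 * r)%:E * supball f (r + 1))%E ->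
     ((enorm y)%:E <= 2%:E * supball f (r + 1))%E).
Proof.
move=> [cvx [f00 _]] _; split=> [x0 y _|r y]; first exact: legendre_gradient_le_supball.
exact: enorm_le_supball.
Qed.
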